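(* A brace $B$ is weakly supersoluble if and only if it is supersoluble.
   Context: A brace (skew left brace) is a set $B$ with two binary operations $+$ and $\cdot$ such that $(B,+)$ and $(B,\cdot)$ are groups and $a(b+c)=ab-a+ac$ for all $a,b,c\in B$. $\lambda_a(b)=-a+ab$ defines a homomorphism $\lambda\colon(B,\cdot)\to\operatorname{Aut}(B,+)$. An ideal is a subset that is a subgroup of both groups, normal in both, and invariant under all $\lambda_b$; quotients by ideals are braces. $\operatorname{Soc}(B)=\operatorname{Ker}\lambda\cap Z(B,+)$. $B$ is supersoluble if there is a finite chain of ideals $\{0\}=I_0\le\dots\le I_n=B$ such that for each $i$, either $(I_{i+1}/I_i,+)$ is infinite cyclic and $I_{i+1}/I_i\le\operatorname{Soc}(B/I_i)$, or $I_{i+1}/I_i$ has prime order. $B$ is weakly supersoluble if there is a finite chain of ideals $\{0\}=I_0\le\dots\le I_n=B$ such that for each $i$, either $(I_{i+1}/I_i,+)$ is an infinite cyclic subgroup contained in the centre of $(B/I_i,+)$, or $I_{i+1}/I_i$ has prime order. *)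

From Stdlib Require Import ZArith Znumtheory List.
Import ListNotations.
Set Implicit Arguments.

Record brace := Brace {
  car :> Type;
  badd : car -> car -> car;
  bzero : car;
  bopp : car -> car;
  bmul : car -> car -> car;
  bone : car;
  binv : car -> car;
  baddA : forall a b c, badd a (badd b c) = badd (badd a b) c;
  badd0l : forall a, badd bzero a = a;
  badd0r : forall a, badd a bzero = a;
  baddNl : forall a, badd (bopp a) a = bzero;
  baddNr : forall a, badd a (bopp a) = bzero;
  bmulA : forall a b c, bmul a (bmul b c) = bmul (bmul a b) c;
  bmul1l : forall a, bmul bone a = a;
  bmul1r : forall a, bmul a bone = a;
  bmulVl : forall a, bmul (binv a) a = bone;
  bmulVr : forall a, bmul a (binv a) = bone;
  brace_law : forall a b c,
    bmul a (badd b c) = badd (badd (bmul a b) (bopp a)) (bmul a c)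
}.

Section BraceDefs.
Variable B : brace.
Local Notation "x + y" := (@badd B x y).
Local Notation "- x" := (@bopp B x).
Local Notation "x * y" := (@bmul B x y).

Definition lambda (a b : B) : B := - a + a * b.

Fixpoint natmul (n : nat) (g : B) : B :=
  match n with O => bzero B | S m => g + natmul m g end.
Definition zmul (k : Z) (g : B) : B :=
  match k with
  | Z0 => bzero B
  | Zpos p => natmul (Pos.to_nat p) g
  | Zneg p => - natmul (Pos.to_nat p) g
  end.

Definition subset_of (I J : B -> Prop) := forall x, I x -> J x.

Definition is_ideal (I : B -> Prop) : Prop :=
  I (bzero B) /\ (forall x y, I x -> I y -> I (x + y)) /\ (forall x, I x -> I (- x)) /\
  I (bone B) /\ (forall x y, I x -> I y -> I (x * y)) /\ (forall x, I x -> I (@binv B x)) /\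
  (forall b x, I x -> I (b + x + - b)) /\
  (forall b x, I x -> I (b * x * @binv B b)) /\
  (forall b x, I x -> I (lambda b x)).

(* x and y lie in the same (additive) coset of I, i.e. [x] = [y] in B/I. *)
Definition cong (I : B -> Prop) (x y : B) : Prop := I (- y + x).

(* (J/I, +) is infinite cyclic (J, I subsets with I <= J):
   cyclic: generated by the class of one element g of J;
   infinite: no finite list of elements represents all classes of J/I. *)
Definition quot_infinite_cyclic (I J : B -> Prop) : Prop :=
  (exists g, J g /\ forall x, J x -> exists k : Z, cong I x (zmul k g)) /\
  ~ (exists s : list B, forall x, J x -> exists y, In y s /\ cong I x y).

(* J/I has prime order: there is a list of representatives of J/I,
   pairwise in distinct classes, covering all classes, of prime length. *)
Definition quot_prime_order (I J : B -> Prop) : Prop :=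
  exists s : list B,
    prime (Z.of_nat (length s)) /\
    (forall y, In y s -> J y) /\
    ForallOrdPairs (fun a b => ~ cong I a b) s /\
    (forall x, J x -> exists y, In y s /\ cong I x y).

Definition quot_central (I J : B -> Prop) : Prop :=
  forall x b, J x -> cong I (x + b) (b + x).

(* J/I is contained in Soc(B/I) = Ker lambda cap Z(B/I,+). *)
Definition quot_in_socle (I J : B -> Prop) : Prop :=
  (forall x b, J x -> cong I (lambda x b) b) /\ quot_central I J.

Definition ideal_chain (n : nat) (I : nat -> B -> Prop) : Prop :=
  (forall x, I 0%nat x <-> x = bzero B) /\
  (forall x, I n x) /\
  (forall i, (i <= n)%nat -> is_ideal (I i)) /\
  (forall i, (i < n)%nat -> subset_of (I i) (I (S i))).

Definition supersoluble : Prop :=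
  exists (n : nat) (I : nat -> B -> Prop), ideal_chain n I /\
    forall i, (i < n)%nat ->
      (quot_infinite_cyclic (I i) (I (S i)) /\ quot_in_socle (I i) (I (S i)))
      \/ quot_prime_order (I i) (I (S i)).

Definition weakly_supersoluble : Prop :=
  exists (n : nat) (I : nat -> B -> Prop), ideal_chain n I /\
    forall i, (i < n)%nat ->
      (quot_infinite_cyclic (I i) (I (S i)) /\ quot_central (I i) (I (S i)))
      \/ quot_prime_order (I i) (I (S i)).

End BraceDefs.

From Stdlib Require Import ZArith Znumtheory List Lia Setoid Morphisms.
Import ListNotations.
Set Implicit Arguments.
Unset Strict Implicit.

(* Each central infinite cyclic factor J/I = <g> of a weakly supersoluble series splits
   into a socle factor and a factor of order 2.  Every [lambda b] acts on J/I as ±1, and the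
   elements of J acting trivially form an infinite cyclic K/I generated by h = g or h = 2g.
   Conjugation in (B, ·) preserves K, so it maps h to ±h; comparing this with the formula
   c h c^-1 ≡ lambda c (h + (- d + lambda h d)), d = c^-1, shows that the additive map
   d |-> - d + lambda h d takes only the values 0 and -2h, hence vanishes.  Thus [lambda h]
   and [lambda (2 g)] are trivial modulo I, and I <= I + 2J <= J is the required refinement. *)

Declare Scope brace_scope.

Section Brace.
Variable B : brace.

Local Notation "x + y" := (@badd B x y) : brace_scope.
Local Notation "- x" := (@bopp B x) : brace_scope.
Local Notation "x * y" := (@bmul B x y) : brace_scope.
Local Notation "0" := (@bzero B) : brace_scope.
Local Notation inv := (@binv B).
Local Notation lam := (@lambda B).
Local Notation nm := (@natmul B).
Local Notation zm := (@zmul B).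
Local Open Scope brace_scope.

Lemma addKr (a b : B) : - a + (a + b) = b.
Proof. rewrite baddA, baddNl, badd0l; reflexivity. Qed.

Lemma addNKr (a b : B) : a + (- a + b) = b.
Proof. rewrite baddA, baddNr, badd0l; reflexivity. Qed.

Lemma addrK (a b : B) : a + b + - b = a.
Proof. rewrite <- baddA, baddNr, badd0r; reflexivity. Qed.

Lemma addr_eq0 (a b : B) : a + b = 0 -> b = - a.
Proof. intro H. rewrite <- (addKr a b), H, badd0r; reflexivity. Qed.

Lemma opprK (a : B) : - - a = a.
Proof. symmetry; apply addr_eq0, baddNl. Qed.

Lemma oppr0 : - (bzero B) = 0.
Proof. symmetry; apply addr_eq0, badd0l. Qed.

Lemma opprD (a b : B) : - (a + b) = - b + - a.
Proof.
  symmetry; apply addr_eq0.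
  rewrite <- baddA, (baddA B b), baddNr, badd0l, baddNr; reflexivity.
Qed.

Lemma addrI (a b c : B) : a + b = a + c -> b = c.
Proof. intro H. rewrite <- (addKr a b), H, addKr; reflexivity. Qed.

Lemma mulb0 (a : B) : a * 0 = a.
Proof.
  pose proof (brace_law B a 0 0) as H.
  rewrite badd0l, <- (badd0r B (a * 0)) in H at 1.
  rewrite <- baddA in H. apply addrI in H.
  rewrite <- (addNKr a (a * 0)), <- H, badd0r; reflexivity.
Qed.

Lemma bone0 : bone B = 0.
Proof. rewrite <- (mulb0 (bone B)), bmul1l; reflexivity. Qed.

Lemma mul0b (a : B) : 0 * a = a.
Proof. rewrite <- bone0; apply bmul1l. Qed.

Lemma mulE (a b : B) : a * b = a + lam a b.
Proof. unfold lambda; rewrite addNKr; reflexivity. Qed.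

Lemma lambdaD (a b c : B) : lam a (b + c) = lam a b + lam a c.
Proof. unfold lambda; rewrite brace_law, !baddA; reflexivity. Qed.

Lemma lambda0r (a : B) : lam a 0 = 0.
Proof. unfold lambda; rewrite mulb0, baddNl; reflexivity. Qed.

Lemma lambdaN (a b : B) : lam a (- b) = - lam a b.
Proof. apply addr_eq0; rewrite <- lambdaD, baddNr, lambda0r; reflexivity. Qed.

Lemma lambdaM (a b c : B) : lam (a * b) c = lam a (lam b c).
Proof.
  assert (H : a * (b * c) = a * b + (- a + a * lam b c)).
  { rewrite (mulE b c), brace_law, !baddA; reflexivity. }
  unfold lambda at 1; rewrite <- bmulA, H, addKr; reflexivity.
Qed.

Lemma lambda0l (b : B) : lam 0 b = b.
Proof. unfold lambda; rewrite oppr0, badd0l, mul0b; reflexivity. Qed.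

Lemma lambdaVK (a b : B) : lam (inv a) (lam a b) = b.
Proof. rewrite <- lambdaM, bmulVl, bone0, lambda0l; reflexivity. Qed.

Lemma lambdaKV (a b : B) : lam a (lam (inv a) b) = b.
Proof. rewrite <- lambdaM, bmulVr, bone0, lambda0l; reflexivity. Qed.

Lemma lambdaV (a : B) : lam a (inv a) = - a.
Proof. apply addr_eq0; rewrite <- mulE, bmulVr, bone0; reflexivity. Qed.

Lemma mulb_eq1 (a b : B) : a * b = bone B -> b = inv a.
Proof.
  intro H.
  rewrite <- (bmul1l B b), <- (bmulVl B a), <- bmulA, H, bmul1r; reflexivity.
Qed.

Lemma invbK (a : B) : inv (inv a) = a.
Proof. symmetry; apply mulb_eq1, bmulVl. Qed.

Lemma natmulC (n : nat) (g : B) : nm n g + g = g + nm n g.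
Proof.
  induction n; simpl.
  - rewrite badd0l, badd0r; reflexivity.
  - rewrite <- baddA, IHn, baddA; reflexivity.
Qed.

Lemma zmulS (k : Z) (g : B) : zm (Z.succ k) g = g + zm k g.
Proof.
  destruct k as [|p|p].
  - simpl; rewrite badd0r; reflexivity.
  - simpl; rewrite Pos2Nat.inj_add, Nat.add_1_r; reflexivity.
  - destruct (Pos.succ_pred_or p) as [->|<-].
    + simpl; rewrite badd0r, baddNr; reflexivity.
    + replace (Z.succ (Z.neg (Pos.succ (Pos.pred p)))) with (Z.neg (Pos.pred p)) by lia.
      unfold zmul; rewrite Pos2Nat.inj_succ; simpl.
      rewrite <- natmulC, opprD, baddA, baddNr, badd0l; reflexivity.
Qed.

Lemma zmulP (k : Z) (g : B) : zm (Z.pred k) g = - g + zm k g.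
Proof. rewrite <- (Z.succ_pred k) at 2; rewrite zmulS, addKr; reflexivity. Qed.

Lemma zmul1 (g : B) : zm 1 g = g.
Proof. apply badd0r. Qed.

Lemma zmulN1 (g : B) : zm (-1) g = - g.
Proof. simpl; rewrite badd0r; reflexivity. Qed.

Lemma zmul2 (g : B) : zm 2 g = g + g.
Proof. simpl; rewrite badd0r; reflexivity. Qed.

Lemma zmulD (a b : Z) (g : B) : zm (a + b) g = zm a g + zm b g.
Proof.
  induction a using Z.peano_ind.
  - simpl; rewrite badd0l; reflexivity.
  - rewrite Z.add_succ_l, !zmulS, IHa, baddA; reflexivity.
  - rewrite Z.add_pred_l, !zmulP, IHa, baddA; reflexivity.
Qed.

Lemma zmulN (a : Z) (g : B) : zm (- a) g = - zm a g.
Proof. apply addr_eq0; rewrite <- zmulD, Z.add_opp_diag_r; reflexivity. Qed.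

Lemma zmulM (a b : Z) (g : B) : zm (a * b) g = zm a (zm b g).
Proof.
  induction a using Z.peano_ind.
  - reflexivity.
  - rewrite Z.mul_succ_l, Z.add_comm, zmulD, zmulS, IHa; reflexivity.
  - rewrite Z.mul_pred_l, <- Z.add_opp_r, Z.add_comm, zmulD, zmulP, zmulN, IHa.
    reflexivity.
Qed.

Lemma zmul_closed (P : B -> Prop) (k : Z) (x : B) :
  P 0 -> (forall y z, P y -> P z -> P (y + z)) -> (forall y, P y -> P (- y)) ->
  P x -> P (zm k x).
Proof.
  intros P0 PD PN Px.
  assert (Pn : forall n, P (nm n x)) by (induction n; simpl; auto).
  destruct k; simpl; auto.
Qed.

Lemma lambda_zmul (x y : B) (k : Z) : lam x (zm k y) = zm k (lam x y).
Proof.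
  assert (H : forall n, lam x (nm n y) = nm n (lam x y)).
  { induction n; simpl; [apply lambda0r | rewrite lambdaD, IHn; reflexivity]. }
  destruct k; simpl; rewrite ?lambdaN, ?H; auto using lambda0r.
Qed.

Section IdealFacts.
Variables (J : B -> Prop) (HJ : is_ideal B J).

Lemma ideal0 : J 0. Proof. apply HJ. Qed.
Lemma idealD x y : J x -> J y -> J (x + y). Proof. apply HJ. Qed.
Lemma idealN x : J x -> J (- x). Proof. apply HJ. Qed.
Lemma idealM x y : J x -> J y -> J (x * y). Proof. apply HJ. Qed.
Lemma idealV x : J x -> J (inv x). Proof. apply HJ. Qed.
Lemma ideal_conjD b x : J x -> J (b + x + - b). Proof. apply HJ. Qed.
Lemma ideal_conjM b x : J x -> J (b * x * inv b). Proof. apply HJ. Qed.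
Lemma ideal_lambda b x : J x -> J (lam b x). Proof. apply HJ. Qed.

Lemma ideal_zmul k x : J x -> J (zm k x).
Proof. apply zmul_closed; [apply ideal0 | apply idealD | apply idealN]. Qed.

(* [j b = b j'] with [j' = b^-1 j b] in [J] gives [j + lam j b = b + lam b j']. *)
Lemma ideal_lambda_cong j b : J j -> cong B J (lam j b) b.
Proof.
  intro Jj.
  set (j' := inv b * j * inv (inv b)).
  assert (Jj' : J j') by (apply ideal_conjM; exact Jj).
  assert (E : j * b = b * j').
  { unfold j'; rewrite invbK, !bmulA, bmulVr, bmul1l; reflexivity. }
  rewrite !mulE in E.
  assert (E' : lam j b = - j + (b + lam b j')) by (rewrite <- E, addKr; reflexivity).
  unfold cong; rewrite E', !baddA.
  apply idealD; [| apply ideal_lambda; exact Jj'].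
  rewrite <- (opprK b) at 2; apply ideal_conjD, idealN, Jj.
Qed.

End IdealFacts.

Section Modulo.
Variables (I : B -> Prop) (HI : is_ideal B I).
Local Notation "x ≡ y" := (cong B I x y) (at level 70).

Lemma cong0E x : x ≡ 0 <-> I x.
Proof. unfold cong; rewrite oppr0, badd0l; tauto. Qed.

#[local] Instance cong_equiv : Equivalence (cong B I).
Proof.
  split.
  - intro x; unfold cong; rewrite baddNl; apply (ideal0 HI).
  - intros x y H; unfold cong in *.
    apply (idealN HI) in H; rewrite opprD, opprK in H; exact H.
  - intros x y z H1 H2; unfold cong in *.
    rewrite <- (addNKr y x), baddA; apply (idealD HI); assumption.
Qed.

#[local] Instance badd_proper : Proper (cong B I ==> cong B I ==> cong B I) (@badd B).
Proof.
  intros x x' Hx y y' Hy; unfold cong in *.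
  rewrite opprD, <- baddA, (baddA B (- x')).
  replace (- y' + (- x' + x + y)) with ((- y' + (- x' + x) + - - y') + (- y' + y)).
  - apply (idealD HI); [apply (ideal_conjD HI) |]; assumption.
  - rewrite opprK, <- !baddA, addNKr; reflexivity.
Qed.

#[local] Instance bopp_proper : Proper (cong B I ==> cong B I) (@bopp B).
Proof.
  intros x x' Hx; unfold cong in *; rewrite opprK.
  apply (idealN HI) in Hx; rewrite opprD, opprK in Hx.
  apply (ideal_conjD HI x) in Hx; rewrite baddA, baddNr, badd0l in Hx; exact Hx.
Qed.

Lemma lambda_congr b x y : x ≡ y -> lam b x ≡ lam b y.
Proof. unfold cong; intro H; rewrite <- lambdaN, <- lambdaD; apply (ideal_lambda HI), H. Qed.

Lemma mul_congr b x y : x ≡ y -> b * x ≡ b * y.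
Proof. intro H; rewrite !mulE; apply badd_proper; [reflexivity | apply lambda_congr, H]. Qed.

Lemma lambda_congl x y b : x ≡ y -> lam x b ≡ lam y b.
Proof.
  intro H.
  assert (Ixy : I (inv x * y)).
  { apply cong0E; rewrite <- bone0, <- (bmulVl B x).
    apply mul_congr; symmetry; exact H. }
  assert (E : y = x * (inv x * y)) by (rewrite bmulA, bmulVr, bmul1l; reflexivity).
  rewrite E, lambdaM; apply lambda_congr; symmetry; apply (ideal_lambda_cong HI), Ixy.
Qed.

#[local] Instance lambda_proper : Proper (cong B I ==> cong B I ==> cong B I) lam.
Proof.
  intros x x' Hx y y' Hy.
  transitivity (lam x y'); [apply lambda_congr | apply lambda_congl]; assumption.
Qed.

#[local] Instance bmul_proper : Proper (cong B I ==> cong B I ==> cong B I) (@bmul B).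
Proof. intros x x' Hx y y' Hy; rewrite !mulE, Hx, Hy; reflexivity. Qed.

#[local] Instance zmul_proper k : Proper (cong B I ==> cong B I) (zm k).
Proof.
  intros x y H.
  assert (Hn : forall n, nm n x ≡ nm n y)
    by (induction n; simpl; [reflexivity | rewrite IHn, H; reflexivity]).
  destruct k; simpl; rewrite ?Hn; reflexivity.
Qed.

Lemma ideal_cong_closed (J : B -> Prop) x y :
  is_ideal B J -> subset_of B I J -> x ≡ y -> J x -> J y.
Proof.
  intros HJ HIJ Hxy Jx; apply HIJ in Hxy.
  rewrite <- (addNKr x y); apply (idealD HJ); [exact Jx |].
  replace (- x + y) with (- (- y + x)) by (rewrite opprD, opprK; reflexivity).
  apply (idealN HJ), Hxy.
Qed.

Lemma inv_cong_opp x : lam x (inv x) ≡ inv x -> inv x ≡ - x.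
Proof.
  intro H.
  assert (E : x + inv x ≡ 0) by (rewrite <- H, <- mulE, bmulVr, bone0; reflexivity).
  rewrite <- (addKr x (inv x)), E, badd0r; reflexivity.
Qed.

Lemma zmul_additive (P : B -> Prop) (f : B -> B) k x :
  P 0 -> (forall y z, P y -> P z -> P (y + z)) -> (forall y, P y -> P (- y)) ->
  (forall y z, P y -> P z -> f (y + z) ≡ f y + f z) ->
  P x -> f (zm k x) ≡ zm k (f x).
Proof.
  intros P0 PD PN fD Px.
  assert (f0 : f 0 ≡ 0).
  { pose proof (fD 0 0 P0 P0) as H; rewrite badd0l in H.
    transitivity (- f 0 + (f 0 + f 0)); [rewrite addKr | rewrite <- H, baddNl];
      reflexivity. }
  assert (fN : forall y, P y -> f (- y) ≡ - f y).
  { intros y Py. rewrite <- (addrK (f (- y)) (f y)), <- fD, baddNl, f0, badd0l;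
      [reflexivity | apply PN | ]; exact Py. }
  assert (fn : forall n, P (nm n x) /\ f (nm n x) ≡ nm n (f x)).
  { induction n as [| n [Pn En]]; simpl; [split; [exact P0 | exact f0] |].
    split; [apply PD; assumption |]. rewrite fD, En; [reflexivity | assumption..]. }
  destruct k; simpl; [exact f0 | apply fn |].
  rewrite fN, (proj2 (fn _)); [reflexivity | apply fn].
Qed.

Section CentralIdeal.
Variables (J : B -> Prop) (HJ : is_ideal B J).
Hypotheses (HIJ : subset_of B I J) (Jcent : quot_central B I J).

Lemma conjg_formula c x :
  J x -> c * x * inv c ≡ lam c (x + (- inv c + lam x (inv c))).
Proof.
  intro Jx.
  rewrite <- bmulA, mulE, (mulE x), !lambdaD, lambdaN, lambdaV, opprK, !baddA.
  rewrite (Jcent c (ideal_lambda HJ c Jx)); reflexivity.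
Qed.

Lemma lambda_defectD x d e : J x ->
  - (d + e) + lam x (d + e) ≡ (- d + lam x d) + (- e + lam x e).
Proof.
  intro Jx.
  set (u := - d + lam x d).
  assert (Ju : J u) by apply (ideal_lambda_cong HJ), Jx.
  assert (E : lam x d = d + u) by (unfold u; rewrite addNKr; reflexivity).
  rewrite lambdaD, E, opprD, <- !baddA, addKr, baddA, <- (Jcent (- e) Ju), <- baddA.
  reflexivity.
Qed.

Lemma socle_ideal (P : B -> Prop) :
  (forall x y, x ≡ y -> P x -> P y) -> P 0 ->
  (forall x y, P x -> P y -> P (x + y)) -> (forall x, P x -> P (- x)) ->
  (forall b x, P x -> P (lam b x)) -> (forall x, P x -> J x) ->
  (forall x b, P x -> lam x b ≡ b) -> is_ideal B P.
Proof.
  intros Pcong P0 PD PN Plam PJ Psoc.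
  repeat split; auto.
  - rewrite bone0; exact P0.
  - intros x y Px Py; apply (Pcong (x + y)); [rewrite mulE, (Psoc x y Px) |]; auto.
    reflexivity.
  - intros x Px; apply (Pcong (- x)); [symmetry; apply inv_cong_opp, Psoc |]; auto.
  - intros b x Px; apply (Pcong x); [| exact Px].
    rewrite <- (Jcent b (PJ x Px)), addrK; reflexivity.
  - intros b x Px; apply (Pcong (lam b x)); [| apply Plam, Px].
    rewrite (conjg_formula b (PJ x Px)), (Psoc x _ Px), baddNl, badd0r; reflexivity.
Qed.

Section CyclicQuotient.
Variable g : B.
Hypotheses (Jg : J g) (Jgen : forall x, J x -> exists k : Z, x ≡ zm k g).
Hypothesis Jinf : ~ (exists s : list B, forall x, J x -> exists y, In y s /\ x ≡ y).

Lemma zmul_gen_eq0 k : I (zm k g) -> k = 0%Z.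
Proof.
  intro Ik; destruct (Z.eq_dec k 0) as [| Hk]; [assumption | exfalso; apply Jinf].
  set (n := Z.abs k).
  assert (Hn : (0 < n)%Z) by (unfold n; lia).
  assert (In : I (zm n g)).
  { unfold n; destruct (Z.abs_eq_or_opp k) as [E | E]; rewrite E; [exact Ik |].
    rewrite zmulN; apply (idealN HI), Ik. }
  exists (map (fun i => zm (Z.of_nat i) g) (seq 0 (Z.to_nat n))).
  intros x Jx; destruct (Jgen Jx) as [m Hm].
  exists (zm (m mod n) g); split.
  - apply in_map_iff; exists (Z.to_nat (m mod n)).
    pose proof (Z.mod_pos_bound m n Hn).
    rewrite Z2Nat.id by lia; split; [reflexivity | apply in_seq; lia].
  - rewrite Hm, (Z.div_mod m n) at 1 by lia.
    rewrite zmulD, Z.mul_comm, zmulM, (proj2 (cong0E _) (ideal_zmul HI _ In)), badd0l.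
    reflexivity.
Qed.

Lemma zmul_gen_inj a b : zm a g ≡ zm b g -> a = b.
Proof.
  unfold cong; rewrite <- zmulN, <- zmulD; intro H.
  apply zmul_gen_eq0 in H; lia.
Qed.

Lemma lambda_gen_sign b : exists s, (s = 1 \/ s = -1)%Z /\ lam b g ≡ zm s g.
Proof.
  destruct (Jgen (ideal_lambda HJ b Jg)) as [s Hs].
  destruct (Jgen (ideal_lambda HJ (inv b) Jg)) as [s' Hs'].
  exists s; split; [| exact Hs].
  assert (E : zm 1 g ≡ zm (s' * s) g).
  { rewrite zmul1, <- (lambdaKV b g) at 1.
    rewrite Hs', lambda_zmul, Hs, zmulM; reflexivity. }
  apply zmul_gen_inj, eq_sym in E; rewrite Z.mul_comm in E.
  apply Z.eq_mul_1 in E; exact E.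
Qed.

Lemma lambda_J_sign b : exists s, (s = 1 \/ s = -1)%Z /\ forall y, J y -> lam b y ≡ zm s y.
Proof.
  destruct (lambda_gen_sign b) as [s [Hs Eb]]; exists s; split; [exact Hs |].
  intros y Jy; destruct (Jgen Jy) as [k ->].
  rewrite lambda_zmul, Eb, <- !zmulM, Z.mul_comm; reflexivity.
Qed.

Definition stab x := J x /\ lam x g ≡ g.

Lemma lambda_stab x y : stab x -> J y -> lam x y ≡ y.
Proof.
  intros [_ Hx] Jy; destruct (Jgen Jy) as [k ->].
  rewrite lambda_zmul, Hx; reflexivity.
Qed.

Lemma stab_cong x y : x ≡ y -> stab x -> stab y.
Proof.
  intros Hxy [Jx Hx]; split; [exact (ideal_cong_closed HJ HIJ Hxy Jx) |].
  rewrite <- Hxy; exact Hx.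
Qed.

Lemma stab0 : stab 0.
Proof. split; [apply (ideal0 HJ) | rewrite lambda0l; reflexivity]. Qed.

Lemma stab_mulE x y : stab x -> J y -> x * y ≡ x + y.
Proof. intros Sx Jy; rewrite mulE, (lambda_stab Sx Jy); reflexivity. Qed.

Lemma stabD x y : stab x -> stab y -> stab (x + y).
Proof.
  intros Sx Sy; apply (stab_cong (stab_mulE Sx (proj1 Sy))).
  destruct Sx as [Jx Hx], Sy as [Jy Hy]; split; [apply (idealM HJ); assumption |].
  rewrite lambdaM, Hy, Hx; reflexivity.
Qed.

Lemma stab_inv x : stab x -> inv x ≡ - x.
Proof. intro Sx; apply inv_cong_opp, lambda_stab, (idealV HJ), Sx; exact Sx. Qed.

Lemma stabN x : stab x -> stab (- x).
Proof.
  intro Sx; apply (stab_cong (stab_inv Sx)); destruct Sx as [Jx Hx].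
  split; [apply (idealV HJ), Jx |].
  rewrite <- Hx at 1; rewrite lambdaVK; reflexivity.
Qed.

Lemma stab_zmul k x : stab x -> stab (zm k x).
Proof. apply zmul_closed; [exact stab0 | exact stabD | exact stabN]. Qed.

(* If [lam g] inverts [g] then so does [lam (- g)], and [g * - g ≡ g + g] fixes [g]. *)
Lemma stab_double : stab (zm 2 g).
Proof.
  destruct (lambda_gen_sign g) as [s [[-> | ->] Hs]].
  - apply stab_zmul; split; [exact Jg | rewrite Hs, zmul1; reflexivity].
  - rewrite zmulN1 in Hs.
    assert (Hneg : lam (- g) g ≡ - g).
    { destruct (lambda_gen_sign (- g)) as [s' [[-> | ->] Hs']];
        [exfalso | rewrite Hs', zmulN1; reflexivity].
      assert (Sg : stab g).
      { rewrite <- (opprK g); apply stabN.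
        split; [apply (idealN HJ), Jg | rewrite Hs', zmul1; reflexivity]. }
      assert (E : zm 1 g ≡ zm (-1) g)
        by (rewrite zmul1, zmulN1, <- Hs at 1; symmetry; apply Sg).
      apply zmul_gen_inj in E; discriminate. }
    apply (stab_cong (x := g * - g)).
    + rewrite mulE, lambdaN, Hs, opprK, zmul2; reflexivity.
    + split; [apply (idealM HJ), (idealN HJ); exact Jg |].
      rewrite lambdaM, Hneg, lambdaN, Hs, opprK; reflexivity.
Qed.

Lemma stab_even_span : ~ stab g -> forall x, stab x -> exists j, x ≡ zm j (zm 2 g).
Proof.
  intros Ng x Sx; destruct (Jgen (proj1 Sx)) as [k Hk].
  destruct (Z.Even_or_Odd k) as [[j ->] | [j ->]].
  - exists j; rewrite Hk, <- zmulM, Z.mul_comm; reflexivity.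
  - exfalso; apply Ng, (stab_cong (x := - zm j (zm 2 g) + x)).
    + rewrite Hk, zmulD, zmul1, (Z.mul_comm 2 j), zmulM, addKr; reflexivity.
    + apply stabD, Sx; apply stabN, stab_zmul, stab_double.
Qed.

Lemma stab_cyclic : exists h, stab h /\ (forall x, stab x -> exists j, x ≡ zm j h) /\
  (forall a b, zm a h ≡ zm b h -> a = b).
Proof.
  destruct (lambda_gen_sign g) as [s [[-> | ->] Hs]].
  - exists g; split; [split; [exact Jg | rewrite Hs, zmul1; reflexivity] |].
    split; [intros x Sx; apply Jgen, Sx | exact zmul_gen_inj].
  - assert (Ng : ~ stab g).
    { intros [_ H]; rewrite Hs in H.
      assert (E : zm (-1) g ≡ zm 1 g) by (rewrite zmul1; exact H).
      apply zmul_gen_inj in E; discriminate. }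
    exists (zm 2 g); split; [exact stab_double |].
    split; [exact (stab_even_span Ng) |].
    intros a b E; rewrite <- !zmulM in E; apply zmul_gen_inj in E; lia.
Qed.

Definition conjg c x := c * x * inv c.

Lemma conjgVK c x : conjg (inv c) (conjg c x) = x.
Proof.
  unfold conjg; rewrite invbK, !bmulA, bmulVl, bmul1l, <- bmulA, bmulVl, bmul1r.
  reflexivity.
Qed.

Lemma conjgM c x y : conjg c (x * y) = conjg c x * conjg c y.
Proof.
  unfold conjg; rewrite !bmulA, <- (bmulA B (c * x) (inv c) c), bmulVl, bmul1r.
  reflexivity.
Qed.

#[local] Instance conjg_proper c : Proper (cong B I ==> cong B I) (conjg c).
Proof. intros x y H; unfold conjg; rewrite H; reflexivity. Qed.

Lemma stab_conjg c x : stab x -> stab (conjg c x).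
Proof.
  intros [Jx Hx]; split; [apply (ideal_conjM HJ), Jx |].
  unfold conjg; rewrite !lambdaM, (lambda_stab (conj Jx Hx) (ideal_lambda HJ _ Jg)).
  rewrite lambdaKV; reflexivity.
Qed.

Lemma conjg_zmul c k x : stab x -> conjg c (zm k x) ≡ zm k (conjg c x).
Proof.
  apply zmul_additive; [exact stab0 | exact stabD | exact stabN |].
  intros y z Sy Sz.
  rewrite <- (stab_mulE Sy (proj1 Sz)), conjgM.
  apply stab_mulE, (stab_conjg c Sz); apply stab_conjg, Sy.
Qed.

Section StabGenerator.
Variable h : B.
Hypotheses (Sh : stab h) (h_span : forall x, stab x -> exists j, x ≡ zm j h).
Hypothesis h_inj : forall a b, zm a h ≡ zm b h -> a = b.

Lemma conjg_h_sign c : exists m, (m = 1 \/ m = -1)%Z /\ conjg c h ≡ zm m h.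
Proof.
  destruct (h_span (stab_conjg c Sh)) as [m Hm].
  destruct (h_span (stab_conjg (inv c) Sh)) as [m' Hm'].
  exists m; split; [| exact Hm].
  assert (E : zm 1 h ≡ zm (m * m') h).
  { rewrite zmul1, <- (conjgVK c h) at 1.
    rewrite Hm, conjg_zmul, Hm', zmulM by exact Sh; reflexivity. }
  apply h_inj, eq_sym, Z.eq_mul_1 in E; exact E.
Qed.

(* [conjg_formula] and [conjg_h_sign] both compute [conjg (inv d) h]; applying [lam d]
   to their agreement gives [h + (- d + lam h d) ≡ ± lam d h ≡ ± h]. *)
Lemma lambda_defect_h d : exists e, (e = 0 \/ e = -2)%Z /\ - d + lam h d ≡ zm e h.
Proof.
  destruct (conjg_h_sign (inv d)) as [m [Hm Em]].
  destruct (lambda_J_sign d) as [s [Hs Es]].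
  pose proof (conjg_formula (inv d) (proj1 Sh)) as F.
  fold (conjg (inv d) h) in F; rewrite invbK, Em in F.
  apply (lambda_congr d) in F.
  rewrite lambdaKV, lambda_zmul, (Es h (proj1 Sh)), <- zmulM in F.
  exists (-1 + m * s)%Z; split; [destruct Hm, Hs; subst; lia |].
  rewrite zmulD, F, zmulN1, addKr; reflexivity.
Qed.

(* [d |-> - d + lam h d] is additive and takes only the values [0] and [-2 h]. *)
Lemma lambda_h_trivial d : lam h d ≡ d.
Proof.
  destruct (lambda_defect_h d) as [e [He Ee]].
  destruct (lambda_defect_h (d + d)) as [e' [He' Ee']].
  assert (E : zm e' h ≡ zm (e + e) h).
  { rewrite <- Ee', lambda_defectD, Ee, zmulD by exact (proj1 Sh); reflexivity. }
  apply h_inj in E; replace e with 0%Z in Ee by lia.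
  rewrite <- (addNKr d (lam h d)), Ee, badd0r; reflexivity.
Qed.

End StabGenerator.

Definition socJ x := J x /\ forall b, lam x b ≡ b.

Lemma socJ_cong x y : x ≡ y -> socJ x -> socJ y.
Proof.
  intros Hxy [Jx Hx]; split; [exact (ideal_cong_closed HJ HIJ Hxy Jx) |].
  intro b; rewrite <- Hxy; apply Hx.
Qed.

Lemma socJ_zmul k x : socJ x -> socJ (zm k x).
Proof.
  apply zmul_closed.
  - split; [apply (ideal0 HJ) | intro b; rewrite lambda0l; reflexivity].
  - intros y z [Jy Hy] [Jz Hz]; apply (socJ_cong (x := y * z)).
    + rewrite mulE, Hy; reflexivity.
    + split; [apply (idealM HJ); assumption | intro b; rewrite lambdaM, Hz, Hy; reflexivity].
  - intros y [Jy Hy]; apply (socJ_cong (x := inv y)).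
    + apply inv_cong_opp, Hy.
    + split; [apply (idealV HJ), Jy | intro b].
      rewrite <- (Hy b) at 1; rewrite lambdaVK; reflexivity.
Qed.

Lemma socJ_double k : socJ (zm k (zm 2 g)).
Proof.
  destruct stab_cyclic as [h [Sh [h_span h_inj]]].
  destruct (h_span _ stab_double) as [m Hm].
  apply socJ_zmul, (socJ_cong (symmetry Hm)), socJ_zmul.
  split; [exact (proj1 Sh) | exact (lambda_h_trivial Sh h_span h_inj)].
Qed.

Definition evens x := exists j, x ≡ zm j (zm 2 g).

Lemma evens_J x : evens x -> J x.
Proof.
  intros [j Hj]; apply (ideal_cong_closed HJ HIJ (symmetry Hj)), (ideal_zmul HJ).
  apply (ideal_zmul HJ), Jg.
Qed.

Lemma evens_ideal : is_ideal B evens.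
Proof.
  apply socle_ideal.
  - intros x y Hxy [j Hj]; exists j; rewrite <- Hxy; exact Hj.
  - exists 0%Z; reflexivity.
  - intros x y [i Hi] [j Hj]; exists (i + j)%Z; rewrite Hi, Hj, zmulD; reflexivity.
  - intros x [j Hj]; exists (- j)%Z; rewrite Hj, zmulN; reflexivity.
  - intros b x [j Hj]; destruct (lambda_J_sign b) as [s [_ Es]].
    exists (s * j)%Z; rewrite Hj, Es, zmulM; [reflexivity |].
    apply (ideal_zmul HJ), (ideal_zmul HJ), Jg.
  - exact evens_J.
  - intros x b [j Hj]; rewrite Hj; apply socJ_double.
Qed.

Lemma evens_infinite_cyclic : quot_infinite_cyclic B I evens.
Proof.
  split.
  - exists (zm 2 g); split; [exists 1%Z; rewrite zmul1; reflexivity |].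
    intros x [j Hj]; exists j; exact Hj.
  - intros [s Hs]; apply Jinf; exists (s ++ map (fun y => y + g) s).
    intros x Jx; destruct (Jgen Jx) as [k Hk].
    destruct (Z.Even_or_Odd k) as [[j ->] | [j ->]].
    + destruct (Hs x) as [y [Hy Ey]];
        [exists j; rewrite Hk, (Z.mul_comm 2 j), zmulM; reflexivity |].
      exists y; split; [apply in_or_app; left |]; assumption.
    + destruct (Hs (zm (2 * j) g)) as [y [Hy Ey]];
        [exists j; rewrite (Z.mul_comm 2 j), zmulM; reflexivity |].
      exists (y + g); split; [apply in_or_app; right; apply in_map_iff; exists y; auto |].
      rewrite Hk, zmulD, Ey, zmul1; reflexivity.
Qed.

Lemma evens_in_socle : quot_in_socle B I evens.
Proof.
  split.
  - intros x b [j Hj]; rewrite Hj; apply socJ_double.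
  - intros x b Ex; apply Jcent, evens_J, Ex.
Qed.

Lemma J_over_evens_prime : quot_prime_order B evens J.
Proof.
  exists [0; g]; split; [apply prime_2 |]; split; [| split].
  - intros y [<- | [<- | []]]; [apply (ideal0 HJ) | exact Jg].
  - repeat constructor. intros [j Hj].
    rewrite badd0r, <- zmulN1, <- zmulM in Hj; apply zmul_gen_inj in Hj; lia.
  - intros x Jx; destruct (Jgen Jx) as [k Hk].
    destruct (Z.Even_or_Odd k) as [[j ->] | [j ->]].
    + exists 0; split; [left; reflexivity |].
      exists j; rewrite oppr0, badd0l, Hk, (Z.mul_comm 2 j), zmulM; reflexivity.
    + exists g; split; [right; left; reflexivity |].
      exists j; rewrite Hk, Z.add_comm, zmulD, zmul1, addKr, (Z.mul_comm 2 j), zmulM.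
      reflexivity.
Qed.

End CyclicQuotient.

Lemma central_cyclic_split : quot_infinite_cyclic B I J ->
  exists I', is_ideal B I' /\ subset_of B I I' /\ subset_of B I' J /\
    (quot_infinite_cyclic B I I' /\ quot_in_socle B I I') /\ quot_prime_order B I' J.
Proof.
  intros [[g [Jg Jgen]] Jinf]; exists (evens g).
  split; [eapply evens_ideal; eassumption |].
  split; [intros x Ix; exists 0%Z; apply cong0E, Ix |].
  split; [intros x; eapply evens_J; eassumption |].
  split; [split; [eapply evens_infinite_cyclic | eapply evens_in_socle]; eassumption |].
  eapply J_over_evens_prime; eassumption.
Qed.

End CentralIdeal.
End Modulo.

Definition central_step (X Y : B -> Prop) :=
  (quot_infinite_cyclic B X Y /\ quot_central B X Y) \/ quot_prime_order B X Y.

Definition socle_step (X Y : B -> Prop) :=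
  (quot_infinite_cyclic B X Y /\ quot_in_socle B X Y) \/ quot_prime_order B X Y.

Lemma central_step_refines X Y : is_ideal B X -> is_ideal B Y -> subset_of B X Y ->
  central_step X Y -> socle_step X Y \/
  exists Z, is_ideal B Z /\ subset_of B X Z /\ subset_of B Z Y /\
    socle_step X Z /\ socle_step Z Y.
Proof.
  unfold socle_step; intros HX HY HXY [[Hic Hc] | Hp]; [right | left; right; exact Hp].
  destruct (central_cyclic_split HX HY HXY Hc Hic) as [Z [HZ [HXZ [HZY [HXs HZp]]]]].
  exists Z; do 3 (split; [assumption |]); split; [left; exact HXs | right; exact HZp].
Qed.

Section Series.
Variable step : (B -> Prop) -> (B -> Prop) -> Prop.

Definition step_series (n : nat) (K : nat -> B -> Prop) :=
  (forall x, K 0%nat x <-> x = 0) /\ (forall i, (i <= n)%nat -> is_ideal B (K i)) /\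
  (forall i, (i < n)%nat -> subset_of B (K i) (K (S i))) /\
  (forall i, (i < n)%nat -> step (K i) (K (S i))).

Lemma ideal_chain_series n K :
  ideal_chain B n K /\ (forall i, (i < n)%nat -> step (K i) (K (S i))) <->
  step_series n K /\ forall x, K n x.
Proof. unfold ideal_chain, step_series; tauto. Qed.

Lemma step_series_snoc n K Y : step_series n K -> is_ideal B Y -> subset_of B (K n) Y ->
  step (K n) Y -> exists K', step_series (S n) K' /\ K' (S n) = Y.
Proof.
  intros [K0 [Kid [Ksub Kstep]]] HY HKY HsY.
  exists (fun i => if (i <=? n)%nat then K i else Y).
  assert (Kle : forall i, (i <= n)%nat -> (if (i <=? n)%nat then K i else Y) = K i)
    by (intros i Hi; rewrite (proj2 (Nat.leb_le i n) Hi); reflexivity).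
  assert (Kgt : forall i, (n < i)%nat -> (if (i <=? n)%nat then K i else Y) = Y)
    by (intros i Hi; rewrite (proj2 (Nat.leb_gt i n) Hi); reflexivity).
  split; [| apply Kgt; lia].
  split; [rewrite Kle by lia; exact K0 |].
  split; [intros i Hi; destruct (Nat.le_gt_cases i n); [rewrite Kle | rewrite Kgt]; auto |].
  split; intros i Hi; rewrite Kle by lia; destruct (Nat.le_gt_cases (S i) n) as [Hl | Hg];
    [rewrite Kle by exact Hl; auto with arith
    | rewrite Kgt by exact Hg; replace i with n by lia; exact HKY
    | rewrite Kle by exact Hl; auto with arith
    | rewrite Kgt by exact Hg; replace i with n by lia; exact HsY].
Qed.

End Series.

Lemma step_series_refine (P Q : (B -> Prop) -> (B -> Prop) -> Prop) n K :
  (forall X Y, is_ideal B X -> is_ideal B Y -> subset_of B X Y -> P X Y -> Q X Y \/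
    exists Z, is_ideal B Z /\ subset_of B X Z /\ subset_of B Z Y /\ Q X Z /\ Q Z Y) ->
  step_series P n K -> exists N K', step_series Q N K' /\ K' N = K n.
Proof.
  intros PQ [K0 [Kid [Ksub Kstep]]].
  enough (H : forall m, (m <= n)%nat -> exists N K', step_series Q N K' /\ K' N = K m)
    by exact (H n (le_n n)).
  induction m as [| m IH]; intro Hm.
  - exists 0%nat, (fun _ => K 0%nat); split; [| reflexivity].
    split; [exact K0 |]; split; [intros i _; apply Kid; lia |]; split; intros; lia.
  - destruct (IH ltac:(lia)) as [N [K' [HK' EK']]].
    destruct (PQ _ _ (Kid m ltac:(lia)) (Kid (S m) ltac:(lia)) (Ksub m ltac:(lia))
      (Kstep m ltac:(lia))) as [Hq | [Z [HZ [HmZ [HZm [HmZq HZmq]]]]]].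
    + destruct (step_series_snoc HK' (Kid (S m) ltac:(lia))) as [K2 [HK2 EK2]];
        rewrite ?EK'; auto with arith.
      exists (S N), K2; auto.
    + destruct (step_series_snoc HK' HZ) as [K1 [HK1 EK1]]; rewrite ?EK'; auto.
      destruct (step_series_snoc HK1 (Kid (S m) ltac:(lia))) as [K2 [HK2 EK2]];
        rewrite ?EK1; auto.
      exists (S (S N)), K2; auto.
Qed.

End Brace.

Theorem theorem3p17 (B : brace) : weakly_supersoluble B <-> supersoluble B.
Proof.
  split.
  - intros [n [K HK]].
    apply (ideal_chain_series (@central_step B)) in HK as [HK HKn].
    destruct (step_series_refine (@central_step_refines B) HK) as [N [K' [HK' EK']]].
    exists N, K'; apply (ideal_chain_series (@socle_step B)).
    rewrite EK'; auto.
  - intros [n [K [HK Hs]]]; exists n, K; split; [exact HK |].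
    intros i Hi; destruct (Hs i Hi) as [[Hic [_ Hc]] | Hp]; [left | right]; auto.
Qed.
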